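(* Let $p\geq 7$ be a prime, $\zeta=e^{2\pi i/p}$, $w=(\zeta,\zeta^2,\dots,\zeta^p)\in\mathbb{C}^p$, and $\sigma\in S_p$. Let $a_1,\dots,a_p\in\mathbb{R}$, not all zero, and let $H=(a_1,\dots,a_p)^\perp$. Suppose $H$ contains both $\sigma w$ and $(ij)(kl)\sigma w$, where $i,j,k,l$ are distinct. Then either \[ \sigma^{-1}(i)+\sigma^{-1}(j)\equiv\sigma^{-1}(k)+\sigma^{-1}(l)\pmod p, \] or $a_i=a_j$ and $a_k=a_l$.
   Context: $S_p$ acts on $\mathbb{C}^p$ by permuting coordinates: the $j$-th coordinate of $\epsilon x$ is $x_{\epsilon^{-1}(j)}$. $H=(a_1,\dots,a_p)^\perp$ is $\{x\in\mathbb{C}^p:\sum_m a_mx_m=0\}$. *)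

From HB Require Import structures.
From mathcomp Require Import all_boot all_order all_algebra all_fingroup.
From mathcomp Require Import reals trigo.
From mathcomp Require Import complex.
Set Implicit Arguments. Unset Strict Implicit. Unset Printing Implicit Defensive.
Import Order.TTheory GRing.Theory Num.Theory.
Local Open Scope ring_scope.
Local Open Scope complex_scope.

(* Coordinates of C^p are indexed by 'I_p; index t : 'I_p stands for the
   paper's coordinate t+1 (so paper coordinates 1..p <-> 0..p-1). *)

Definition zeta (R : realType) (p : nat) : R[i] :=
  cos (2 * pi / p%:R) +i* sin (2 * pi / p%:R).

Definition wvec (R : realType) (p : nat) : 'I_p -> R[i] :=
  fun t => zeta R p ^+ (t.+1).

Definition permute (p : nat) (T : Type) (s : 'S_p) (x : 'I_p -> T) : 'I_p -> T :=
  fun j => x ((s^-1)%g j).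

Definition in_hyperplane (R : realType) (p : nat) (a : 'I_p -> R)
  (x : 'I_p -> R[i]) : Prop :=
  \sum_(m < p) (a m)%:C * x m = 0.

From HB Require Import structures.
From mathcomp Require Import all_boot all_order all_algebra all_fingroup.
From mathcomp Require Import reals trigo.
From mathcomp Require Import complex ring.
Import Order.TTheory GRing.Theory Num.Theory.
Local Open Scope ring_scope.
Local Open Scope complex_scope.

(* Put x_m := zeta^(sigma^-1(m)+1).  The two hyperplane conditions say that
   sum_m a_m x_m and sum_m a_m x_(tau m) vanish, tau = (ij)(kl), so their
   difference gives (a_i - a_j)(x_j - x_i) + (a_k - a_l)(x_l - x_k) = 0: a
   relation with real coefficients between chords of the unit circle.
   Conjugating it and using conj x = 1/x gives a second relation, and
   eliminating a_k - a_l yields (a_i - a_j)(x_j - x_i)(x_i x_j - x_k x_l) = 0.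
   As the x_m are distinct p-th roots of unity, either x_i x_j = x_k x_l, which
   is the congruence, or a_i = a_j, and then a_k = a_l as well. *)

Section Zeta.
Context (R : realType) {p : nat}.

Lemma zetaX (n : nat) :
  zeta R p ^+ n = cos (n%:R * (2 * pi / p%:R)) +i* sin (n%:R * (2 * pi / p%:R)).
Proof.
elim: n => [|n IHn]; first by rewrite expr0 mul0r cos0 sin0.
rewrite exprS IHn /zeta; set t := 2 * pi / p%:R.
rewrite -natr1 mulrDl mul1r cosD sinD.
by apply/eqP; rewrite eq_complex /=; apply/andP; split; apply/eqP; ring.
Qed.

Lemma zeta_expr_order : (0 < p)%N -> zeta R p ^+ p = 1.
Proof.
move=> p_gt0; rewrite zetaX mulrC divfK ?pnatr_eq0 -?lt0n //.
by rewrite mulrC mulr_natr cos2pi sin2pi.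
Qed.

Lemma zeta_neq1 : (1 < p)%N -> zeta R p != 1.
Proof.
move=> p_gt1; apply/negP => /eqP/(congr1 (@complex.Re R)) /= cos_eq1.
have p_pos : (0 : R) < p%:R by rewrite ltr0n ltnW.
have t_pos : (0 : R) < 2 * pi / p%:R by rewrite divr_gt0 ?mulr_gt0 ?pi_gt0.
have t_le_pi : (2 : R) * pi / p%:R <= pi.
  by rewrite ler_pdivrMr // [_ * pi]mulrC ler_pM2l ?pi_gt0 // ler_nat.
have : 2 * pi / p%:R = 0 :> R.
  by apply: cos_inj; rewrite ?cos0 // in_itv /= ?lexx ?pi_ge0 ?(ltW t_pos).
by move/eqP; rewrite gt_eqF.
Qed.

Lemma zeta_prim_root : prime p -> p.-primitive_root (zeta R p).
Proof.
move=> p_prime; have p_gt0 := prime_gt0 p_prime.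
have [d d_prim d_dvd_p] := prim_order_exists p_gt0 (zeta_expr_order p_gt0).
case/primeP: p_prime => p_gt1 /(_ d d_dvd_p) /orP[] /eqP d_eq.
  move: (prim_expr_order d_prim); rewrite d_eq expr1 => /eqP.
  by rewrite (negbTE (zeta_neq1 p_gt1)).
by rewrite d_eq in d_prim.
Qed.

Lemma norm_zeta : `|zeta R p| = 1.
Proof.
apply/eqP; rewrite -sqrp_eq1 // normCKC /zeta; set t := 2 * pi / p%:R.
rewrite eq_complex /=; apply/andP; split; apply/eqP; last by ring.
by rewrite -(cos2Dsin2 t); ring.
Qed.
Lemma eq_zeta_expS_mul (m n r s : nat) : prime p ->
  (zeta R p ^+ m.+1 * zeta R p ^+ n.+1 == zeta R p ^+ r.+1 * zeta R p ^+ s.+1)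
  = (m + n == r + s %[mod p])%N.
Proof.
move=> p_prime; rewrite -!exprD (eq_prim_root_expr (zeta_prim_root p_prime)).
by rewrite !addSn !addnS -(addn2 (m + n)) -(addn2 (r + s)) eqn_modDr.
Qed.

Lemma zeta_expS_inj : prime p -> injective (fun n : 'I_p => zeta R p ^+ n.+1).
Proof.
move=> p_prime m n /eqP; rewrite (eq_prim_root_expr (zeta_prim_root p_prime)).
by rewrite -(addn1 m) -(addn1 n) eqn_modDr !modn_small // => /eqP/val_inj.
Qed.
End Zeta.

Section UnitCircleChords.
Context {C : numClosedFieldType}.

Lemma conjC_chord (u v : C) : `|u| = 1 -> `|v| = 1 -> (v^* - u^*) * (u * v) = u - v.
Proof.
move=> u_unit v_unit; transitivity ((v^* * v) * u - (u^* * u) * v); first by ring.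
by rewrite -!normCKC u_unit v_unit expr1n !mul1r.
Qed.

Context {al be u1 u2 u3 u4 : C}.
Hypotheses (al_real : al \is Num.real) (be_real : be \is Num.real).
Hypotheses (u1_unit : `|u1| = 1) (u2_unit : `|u2| = 1).
Hypotheses (u3_unit : `|u3| = 1) (u4_unit : `|u4| = 1).
Hypothesis chords_rel : al * (u2 - u1) + be * (u4 - u3) = 0.

Lemma real_chords_relationM : al * (u2 - u1) * (u1 * u2 - u3 * u4) = 0.
Proof.
have rel_conj : al * (u2^* - u1^*) + be * (u4^* - u3^*) = 0.
  have := congr1 Num.conj chords_rel.
  rewrite rmorph0 rmorphD !rmorphM !rmorphB /=.
  by rewrite (conj_Creal al_real) (conj_Creal be_real).
have rel : be * (u3 - u4) = al * (u2 - u1).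
  by apply/eqP; rewrite -[u3 - u4]opprB mulrN eqr_oppLR -addr_eq0 addrC chords_rel.
have : (al * (u2^* - u1^*) + be * (u4^* - u3^*)) * (u1 * u2 * (u3 * u4)) = 0.
  by rewrite rel_conj mul0r.
have -> : (al * (u2^* - u1^*) + be * (u4^* - u3^*)) * (u1 * u2 * (u3 * u4)) =
    al * ((u2^* - u1^*) * (u1 * u2)) * (u3 * u4)
    + be * ((u4^* - u3^*) * (u3 * u4)) * (u1 * u2).
  by ring.
rewrite !conjC_chord // rel => <-; ring.
Qed.

Lemma real_chords_dichotomy :
  u1 != u2 -> u3 != u4 -> u1 * u2 = u3 * u4 \/ (al = 0 /\ be = 0).
Proof.
move=> u12 u34; have [al0 | al_neq0] := eqVneq al 0.
  right; split=> //; move/eqP: chords_rel; rewrite al0 mul0r add0r mulf_eq0 subr_eq0.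
  by rewrite [u4 == _]eq_sym (negbTE u34) orbF => /eqP.
left; move/eqP: real_chords_relationM.
rewrite !mulf_eq0 (negbTE al_neq0) subr_eq0 [u2 == _]eq_sym (negbTE u12) /=.
by rewrite subr_eq0 => /eqP.
Qed.
End UnitCircleChords.

Lemma sumr_tperm2 (I : finType) (F : pzRingType) (a x : I -> F) (i j k l : I) :
  uniq [:: i; j; k; l] ->
  \sum_m a m * x (tperm i j (tperm k l m)) - \sum_m a m * x m =
  (a i - a j) * (x j - x i) + (a k - a l) * (x l - x k).
Proof.
rewrite /= !inE !negb_or => /and4P[/and3P[ij ik il] /andP[jk jl] kl _].
rewrite -sumrB (bigD1 i) // (bigD1 j) ?[j == _]eq_sym //=.
rewrite (bigD1 k) ?[k == _]eq_sym ?ik ?jk //=.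
rewrite (bigD1 l) ?[l == _]eq_sym ?il ?jl ?kl //= big1 ?addr0; last first.
  move=> m /andP[/andP[/andP[mi mj] mk] ml].
  by rewrite (@tpermD _ k l) 1?eq_sym // (@tpermD _ i j) 1?eq_sym // subrr.
rewrite (@tpermD _ k l i) 1?eq_sym // tpermL (@tpermD _ k l j) 1?eq_sym // tpermR.
rewrite tpermL (@tpermD _ i j l) // tpermR (@tpermD _ i j k) //.
by rewrite !mulrBl !mulrBr !opprB !addrA.
Qed.

Theorem lemma4p7 (R : realType) (p : nat) (hp : prime p) (hp7 : (7 <= p)%N)
  (sigma : 'S_p) (a : 'I_p -> R) (ha : exists m, a m != 0)
  (i j k l : 'I_p) (hdist : uniq [:: i; j; k; l])
  (hsig : in_hyperplane a (permute sigma (@wvec R p)))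
  (htau : in_hyperplane a
            (permute (tperm i j * tperm k l)%g (permute sigma (@wvec R p)))) :
  (nat_of_ord ((sigma^-1)%g i) + nat_of_ord ((sigma^-1)%g j)
     = nat_of_ord ((sigma^-1)%g k) + nat_of_ord ((sigma^-1)%g l) %[mod p])%N
  \/ (a i = a j /\ a k = a l).
Proof.
pose x m := zeta R p ^+ ((sigma^-1)%g m).+1.
have x_norm m : `|x m| = 1 by rewrite normrX norm_zeta expr1n.
have x_inj : injective x := inj_comp (zeta_expS_inj R hp) (@perm_inj _ sigma^-1).
have real_C (r : R) : r%:C \is Num.real by rewrite complex_real.
have rel : ((a i)%:C - (a j)%:C) * (x j - x i)
           + ((a k)%:C - (a l)%:C) * (x l - x k) = 0.
  have htau' : \sum_m (a m)%:C * x (tperm i j (tperm k l m)) = 0.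
    by rewrite -[RHS]htau; apply: eq_bigr => m _; rewrite /permute invMg !tpermV permM.
  by rewrite -(@sumr_tperm2 _ _ (fun m => (a m)%:C) x) // htau' hsig subrr.
move: (hdist); rewrite /= !inE !negb_or => /and4P[/and3P[ij _ _] _ kl _].
have [x_prodE | [ai_aj ak_al]] := real_chords_dichotomy
  (rpredB (real_C _) (real_C _)) (rpredB (real_C _) (real_C _))
  (x_norm i) (x_norm j) (x_norm k) (x_norm l) rel
  (contra_neq (@x_inj _ _) ij) (contra_neq (@x_inj _ _) kl).
  by left; apply/eqP; rewrite -(eq_zeta_expS_mul R) // x_prodE.
by right; split; apply: complexI; apply/eqP; rewrite -subr_eq0 ?ai_aj ?ak_al.
Qed.
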